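(* Let $K$ be a field of any characteristic. Let $d_1,\ldots,d_n$ be positive integers and let $a_{i,j}$ ($1\le i\le 2$, $1\le j\le n$) be nonnegative integers such that for each $i\in\{1,2\}$ at least one of $a_{i,1},\ldots,a_{i,n}$ is nonzero. Let $A$ be the set of columns of the $n\times(n+2)$ matrix $$\begin{pmatrix} d_1 & 0 & \cdots & 0 & a_{1,1} & a_{2,1}\\ 0 & d_2 & \cdots & 0 & a_{1,2} & a_{2,2}\\ \vdots & & \ddots & & \vdots & \vdots\\ 0 & 0 & \cdots & d_n & a_{1,n} & a_{2,n}\end{pmatrix},$$ so that $V(I_A)$ is a simplicial toric variety and $I_A\subset K[x_1,\ldots,x_{n+2}]$ has height $2$. Then $2\le\mathrm{Split}_{\mathrm{rad}}(I_A)\le 3$.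
   Context: For a configuration $A=\{{\bf a}_1,\ldots,{\bf a}_N\}\subset\mathbb{Z}^n$ with $\ker_{\mathbb{Z}}(A)\cap\mathbb{N}^N=\{{\bf 0}\}$, the toric ideal $I_A$ is the kernel of $K[x_1,\ldots,x_N]\to K[t_1^{\pm1},\ldots,t_n^{\pm1}]$, $x_i\mapsto{\bf t}^{{\bf a}_i}$. $\mathrm{Split}_{\mathrm{rad}}(I_A)$ is the smallest integer $r$ such that there exist toric ideals $I_{A_1},\ldots,I_{A_r}\subset K[x_1,\ldots,x_N]$ with $I_A=\mathrm{rad}(I_{A_1}+\cdots+I_{A_r})$ and $I_{A_i}\ne I_A$ for all $i$. *)

From HB Require Import structures.
From mathcomp Require Import all_boot all_order all_algebra.
From mathcomp Require Import mpoly.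
Set Implicit Arguments. Unset Strict Implicit. Unset Printing Implicit Defensive.
Import Order.TTheory GRing.Theory Num.Theory.
Local Open Scope ring_scope.

(* A configuration of N vectors in Z^n: column j is (A j : 'I_n -> int). *)
Definition config (N n : nat) := 'I_N -> 'I_n -> int.

Definition pointed_config (N n : nat) (A : config N n) : Prop :=
  forall u : 'I_N -> nat,
    (forall k : 'I_n, \sum_(j < N) (u j)%:Z * A j k = 0) -> forall j, u j = 0%N.

(* exponent of t of the image of x^m under x_j |-> t^{a_j} : the vector A m *)
Definition Aimg (N n : nat) (A : config N n) (m : 'X_{1..N}) : {ffun 'I_n -> int} :=
  [ffun k => \sum_(j < N) ((m j)%:Z * A j k)%R].

(* Toric ideal I_A = kernel of K[x_1..x_N] -> K[t^{±1}] = K[Z^n], x_j |-> t^{a_j}.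
   The image of f is sum_m f@_m t^{A m}; it vanishes iff for each b in Z^n
   the coefficients of the monomials m with A m = b sum to 0. *)
Definition toric_ideal (K : fieldType) (N n : nat) (A : config N n)
  (f : {mpoly K[N]}) : Prop :=
  forall b : {ffun 'I_n -> int},
    \sum_(m <- msupp f | Aimg A m == b) f@_m = 0.

Definition ideal_sum (K : fieldType) (N r : nat) (I : 'I_r -> {mpoly K[N]} -> Prop)
  (f : {mpoly K[N]}) : Prop :=
  exists g : 'I_r -> {mpoly K[N]}, (forall i, I i (g i)) /\ f = \sum_(i < r) g i.

Definition radical (K : fieldType) (N : nat) (J : {mpoly K[N]} -> Prop)
  (f : {mpoly K[N]}) : Prop := exists k : nat, J (f ^+ k).

Definition rad_split_with (K : fieldType) (N n : nat) (A : config N n) (r : nat) : Prop :=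
  exists (ns : 'I_r -> nat) (As : forall i : 'I_r, config N (ns i)),
    (forall i, pointed_config (As i)) /\
    (forall f : {mpoly K[N]},
        toric_ideal A f <-> radical (ideal_sum (fun i => @toric_ideal K N (ns i) (As i))) f) /\
    (forall i, ~ (forall f : {mpoly K[N]}, toric_ideal (As i) f <-> toric_ideal A f)).

(* The configuration of the columns of
   [ diag(d_1..d_n) | a_1 | a_2 ], with a_i = (a i 0, ..., a i (n-1)). *)
Definition corconfig (n : nat) (d : 'I_n -> nat) (a : 'I_2 -> 'I_n -> nat)
  : config (n + 2) n :=
  fun j k => match split j with
             | inl j' => if j' == k then (d k)%:Z else 0
             | inr i => (a i k)%:Z
             end.

From HB Require Import structures.
From mathcomp Require Import all_boot all_order all_algebra.
From mathcomp Require Import mpoly ssrcomplements bigenough.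
From mathcomp Require Import zify ring.
Import BigEnough.
Set Implicit Arguments. Unset Strict Implicit. Unset Printing Implicit Defensive.
Import Order.TTheory GRing.Theory Num.Theory.
Local Open Scope ring_scope.

(* Lower bound: a single toric ideal [I_B] with [rad I_B = I_A] equals [I_A],
   because [I_A] is spanned by binomials and a power of a binomial lies in a
   toric ideal only if the binomial does; and [rad 0 = 0] while [I_A <> 0].

   Upper bound: write [x_1..x_n, y, z] for the variables.  The pairs [(P, Q)]
   with [d_k | P a_1k + Q a_2k] for all [k] form a lattice with Hermite basis
   [(p1, 0), (p3, g)], containing also [(0, q2)].  Appending to [A] the row [z],
   the row [y], resp. the row [g y - p3 z] gives toric ideals strictly inside
   [I_A] containing [y^p1 - x^alpha], [z^q2 - x^beta], resp.
   [y^p3 z^g - x^gamma].  Modulo their sum [J], two monomials [x^m1], [x^m2] of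
   the same [A]-degree become congruent after multiplication by a power of
   [x^m1]: the lattice lets one trade powers of [y^p1] and [y^p3 z^g] (or of
   [z^q2] if no [y] occurs) for [x]-monomials, after first creating a factor
   [y] from [z] and [x] if [x^m1] has none.  Hence [x^m1 - x^m2] lies in
   [rad J]; conversely [rad J] lies in [I_A], the kernel of a monomial map into
   a polynomial ring. *)

Section ToricIdeal.
Variables (K : fieldType) (N n : nat) (A : config N n).
Implicit Types (f h : {mpoly K[N]}) (m : 'X_{1..N}) (b : {ffun 'I_n -> int}).

Lemma AimgD m1 m2 : Aimg A (m1 + m2)%MM = Aimg A m1 + Aimg A m2.
Proof.
apply/ffunP=> k; rewrite !ffunE -big_split; apply: eq_bigr=> j _.
by rewrite mnmDE PoszD mulrDl.
Qed.

Lemma Aimg0 : Aimg A 0%MM = 0.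
Proof. by apply/ffunP=> k; rewrite !ffunE big1 // => j _; rewrite mnm0E mul0r. Qed.

Lemma AimgMn m k : Aimg A (m *+ k)%MM = Aimg A m *+ k.
Proof.
elim: k => [|k IH]; first by rewrite mulm0n Aimg0.
by rewrite mulmS AimgD IH mulrS.
Qed.

Definition toric_coef b f : K := \sum_(m <- msupp f) f@_m * (Aimg A m == b)%:R.

Lemma toric_idealE f : toric_ideal A f <-> forall b, toric_coef b f = 0.
Proof.
suff coefE b : toric_coef b f = \sum_(m <- msupp f | Aimg A m == b) f@_m.
  by split=> H b; rewrite ?coefE // -coefE.
rewrite [RHS]big_mkcond; apply: eq_bigr=> m _.
by case: eqP; rewrite ?mulr1 ?mulr0.
Qed.

Lemma toric_coef_bound b f i : (msize f <= i)%N ->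
  toric_coef b f = \sum_(m : 'X_{1..N < i}) f@_m * (Aimg A m == b)%:R.
Proof.
move=> le_fi; rewrite /toric_coef (big_mksub 'X_{1..N < i}) ?msupp_uniq //=; last first.
  by move=> m /msize_mdeg_lt /leq_trans; apply.
by rewrite big_rmcond //= => m /memN_msupp_eq0 ->; rewrite mul0r.
Qed.

Lemma toric_coefD b f h : toric_coef b (f + h) = toric_coef b f + toric_coef b h.
Proof.
pose_big_enough i.
  rewrite !(@toric_coef_bound b _ i) // -big_split; apply/eq_bigr=> m _.
  by rewrite mcoeffD mulrDl.
by close.
Qed.

Lemma toric_coefZ b c f : toric_coef b (c *: f) = c * toric_coef b f.
Proof.
pose_big_enough i.
  rewrite !(@toric_coef_bound b _ i) // mulr_sumr; apply/eq_bigr=> m _.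
  by rewrite mcoeffZ mulrA.
by close.
Qed.

Lemma toric_coef0 b : toric_coef b 0 = 0.
Proof. by rewrite /toric_coef msupp0 big_nil. Qed.

Lemma toric_coef_sum b I (r : seq I) (F : I -> {mpoly K[N]}) :
  toric_coef b (\sum_(i <- r) F i) = \sum_(i <- r) toric_coef b (F i).
Proof. exact: (big_morph _ (@toric_coefD b) (toric_coef0 b)). Qed.

Lemma toric_coefX b m : toric_coef b 'X_[m] = (Aimg A m == b)%:R.
Proof. by rewrite /toric_coef msuppX big_seq1 mcoeffX eqxx mul1r. Qed.

Lemma toric_coefXM b m f : toric_coef b ('X_[m] * f) = toric_coef (b - Aimg A m) f.
Proof.
rewrite {1}[f]mpolyE mulr_sumr toric_coef_sum [RHS]/toric_coef.
apply: eq_bigr=> m' _; rewrite -scalerAr -mpolyXD toric_coefZ toric_coefX AimgD.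
by rewrite [Aimg A m' == _]eq_sym subr_eq eq_sym addrC.
Qed.

Local Notation toric := (@toric_ideal K N n A).

Lemma toric0 : toric 0.
Proof. by apply/toric_idealE=> b; rewrite toric_coef0. Qed.

Lemma toricD f h : toric f -> toric h -> toric (f + h).
Proof.
move=> /toric_idealE Hf /toric_idealE Hh.
by apply/toric_idealE=> b; rewrite toric_coefD Hf Hh addr0.
Qed.

Lemma toricZ c f : toric f -> toric (c *: f).
Proof.
by move=> /toric_idealE Hf; apply/toric_idealE=> b; rewrite toric_coefZ Hf mulr0.
Qed.

Lemma toricM h f : toric f -> toric (h * f).
Proof.
move=> /toric_idealE Hf; apply/toric_idealE=> b.
rewrite {1}[h]mpolyE mulr_suml toric_coef_sum big1 // => m _.
by rewrite -scalerAl toric_coefZ toric_coefXM Hf mulr0.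
Qed.

Lemma toric_sum I (r : seq I) (F : I -> {mpoly K[N]}) :
  (forall i, toric (F i)) -> toric (\sum_(i <- r) F i).
Proof. by move=> H; apply: (big_ind _ toric0 toricD). Qed.

Lemma toric_binom m m' : Aimg A m = Aimg A m' -> toric ('X_[m] - 'X_[m']).
Proof.
move=> E; apply/toric_idealE=> b.
by rewrite toric_coefD -scaleN1r toric_coefZ !toric_coefX E mulN1r subrr.
Qed.

(* Each fiber of [Aimg A] meeting [msupp f] gets a representative [rep]; the
   coefficients of [f] on a fiber sum to zero, so the [rep]-terms cancel. *)
Lemma toric_binomial_span f : toric f ->
  exists rep : 'X_{1..N} -> 'X_{1..N},
    (forall m, Aimg A (rep m) = Aimg A m) /\
    f = \sum_(m <- msupp f) f@_m *: ('X_[m] - 'X_[rep m]).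
Proof.
move=> /toric_idealE Hf; set s := msupp f.
pose rep m := if m \in s then nth 0%MM s (find (fun m' => Aimg A m' == Aimg A m) s) else m.
have repA m : Aimg A (rep m) = Aimg A m.
  rewrite /rep; case: ifP => // ms; apply/eqP.
  by apply: (@nth_find _ 0%MM (fun m' => Aimg A m' == Aimg A m)); apply/hasP; exists m.
exists rep; split=> //.
under eq_bigr do rewrite scalerBr.
rewrite sumrB /s -mpolyE.
suff -> : \sum_(m <- msupp f) f@_m *: 'X_[rep m] = 0 by rewrite subr0.
apply/mpolyP=> m0; rewrite mcoeff0 raddf_sum /=.
have [/hasP [m1 m1s /eqP <-]|hn] := boolP (has (fun m => rep m == m0) (msupp f)).
  rewrite -[RHS](Hf (Aimg A m1)) /toric_coef big_seq [RHS]big_seq.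
  apply: eq_bigr=> m ms; rewrite mcoeffZ mcoeffX.
  congr (_ * (nat_of_bool _)%:R); apply/idP/idP => /eqP E; apply/eqP.
    by rewrite -repA E repA.
  by rewrite /rep ms m1s E.
rewrite big_seq big1 // => m ms; rewrite mcoeffZ mcoeffX.
by move/hasPn: hn => /(_ m ms) /negbTE ->; rewrite mulr0.
Qed.

Lemma toric_coef_binom_expr m m' k : Aimg A m != Aimg A m' ->
  toric_coef (Aimg A m *+ k) (('X_[m] - 'X_[m']) ^+ k) = 1.
Proof.
move=> neq; rewrite exprBn toric_coef_sum big_ord_recl big1 => [|i _].
  by rewrite subn0 !expr0 !mul1r mulr1 bin0 mpolyXn toric_coefX AimgMn eqxx addr0.
rewrite -mulrA -mulrnAl -mpolyC1 -mpolyCN -rmorphXn -mpolyCMn mul_mpolyC toric_coefZ.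
rewrite mpolyXn mpolyXn -mpolyXD toric_coefX AimgD !AimgMn.
case: i => i lt_ik /=; rewrite /bump leq0n add1n.
case: eqP => [|_]; last by rewrite mulr0.
rewrite -[X in _ = _ *+ X](subnK lt_ik) mulrnDr => /addrI /ffunP E; case/eqP: neq.
by apply/ffunP=> l; have := E l; rewrite !ffunMnE => /eqP; rewrite eqr_pMn2r // => /eqP.
Qed.

Lemma toric_binom_expr m m' k : Aimg A m != Aimg A m' -> ~ toric (('X_[m] - 'X_[m']) ^+ k).
Proof.
move=> neq /toric_idealE /(_ (Aimg A m *+ k)).
by rewrite toric_coef_binom_expr // => /eqP; rewrite oner_eq0.
Qed.

End ToricIdeal.

Section Ideals.
Variables (R : comPzRingType) (J : R -> Prop).

Definition is_ideal := [/\ J 0, (forall x y, J x -> J y -> J (x + y)) &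
   (forall h x, J x -> J (h * x))].

Hypothesis idealJ : is_ideal.

Lemma ideal0 : J 0.
Proof. by case: idealJ. Qed.

Lemma idealD x y : J x -> J y -> J (x + y).
Proof. by case: idealJ => _ + _; apply. Qed.

Lemma idealMl h x : J x -> J (h * x).
Proof. by case: idealJ => _ _; apply. Qed.

Lemma idealMr h x : J x -> J (x * h).
Proof. by rewrite mulrC; apply: idealMl. Qed.

Lemma idealN x : J x -> J (- x).
Proof. by rewrite -mulN1r; apply: idealMl. Qed.

Lemma ideal_sum_seq (I : eqType) (r : seq I) (F : I -> R) :
  (forall i, i \in r -> J (F i)) -> J (\sum_(i <- r) F i).
Proof.
by move=> JF; rewrite big_seq; apply: big_ind => //; [apply: ideal0 | apply: idealD].
Qed.

(* In the expansion of [(x + y) ^+ (i + j)] every monomial is divisible by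
   [x ^+ i] or by [y ^+ j]. *)
Lemma ideal_exprD_mul x y z i j : J (x ^+ i * z) -> J (y ^+ j * z) ->
  J ((x + y) ^+ (i + j) * z).
Proof.
move=> Jx Jy; rewrite exprDn mulr_suml; apply: ideal_sum_seq => l _.
rewrite mulrnAl -mulr_natr; apply: idealMr.
case: (leqP j l) => [le_jl|lt_lj].
  by rewrite -(subnK le_jl) exprD mulrA -[_ * _ * z]mulrA; apply: idealMl.
rewrite -[(i + j - l)%N](@subnK i) ?exprD; last by lia.
set u := x ^+ (_ - _ - _).
have -> : u * x ^+ i * y ^+ l * z = u * y ^+ l * (x ^+ i * z) by ring.
exact: idealMl.
Qed.

Lemma ideal_exprD x y i j : J (x ^+ i) -> J (y ^+ j) -> J ((x + y) ^+ (i + j)).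
Proof.
by rewrite -[x ^+ i]mulr1 -[y ^+ j]mulr1 -[_ ^+ (i + j)]mulr1; apply: ideal_exprD_mul.
Qed.

Lemma ideal_expr_sum (I : eqType) (r : seq I) (F : I -> R) :
  (forall i, i \in r -> exists k, J (F i ^+ k)) ->
  exists k, J ((\sum_(i <- r) F i) ^+ k).
Proof.
elim: r => [|i r IHr] JF; first by exists 1%N; rewrite big_nil expr1; apply: ideal0.
have [ki Ji] := JF i (mem_head i r).
have [kr Jr] := IHr (fun l lr => JF l (@mem_behead _ (i :: r) l lr)).
by exists (ki + kr)%N; rewrite big_cons; apply: ideal_exprD.
Qed.

Lemma ideal_exprB x y k : J (x ^+ k * (x - y)) -> J (y ^+ k * (x - y)) ->
  J ((x - y) ^+ (k + k).+1).
Proof.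
move=> Jx Jy; rewrite exprSr; apply: ideal_exprD_mul => //.
by rewrite exprNn -mulrA; apply: idealMl.
Qed.

End Ideals.

Section IdealSum.
Variables (K : fieldType) (N r : nat) (I : 'I_r -> {mpoly K[N]} -> Prop).
Hypothesis idealI : forall i, is_ideal (I i).

Lemma ideal_sum_is_ideal : is_ideal (ideal_sum I).
Proof.
split.
- by exists (fun _ => 0); split=> [i|]; [exact: (ideal0 (idealI i)) | rewrite big1].
- move=> _ _ [f [If ->]] [h [Ih ->]]; exists (fun i => f i + h i).
  split=> [i|]; last by rewrite big_split.
  exact: (idealD (idealI i) (If i) (Ih i)).
- move=> h _ [f [If ->]]; exists (fun i => h * f i).
  split=> [i|]; last by rewrite mulr_sumr.
  exact: (idealMl (idealI i) _ (If i)).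
Qed.

Lemma ideal_sum_mem i f : I i f -> ideal_sum I f.
Proof.
move=> Iif; exists (fun j => if j == i then f else 0); split.
  by move=> j; case: eqP => [->|_] //; exact: (ideal0 (idealI j)).
by rewrite (bigD1 i) //= eqxx big1 ?addr0 // => j /negbTE ->.
Qed.

End IdealSum.

Lemma toric_is_ideal (K : fieldType) N n (A : config N n) : is_ideal (@toric_ideal K N n A).
Proof. by split; [apply: toric0 | apply: toricD | apply: toricM]. Qed.

Section MonomialCongruence.
Variables (K : fieldType) (N : nat) (J : {mpoly K[N]} -> Prop).
Hypothesis idealJ : is_ideal J.
Implicit Types (m : 'X_{1..N}).

Definition mcong m m' := J ('X_[m] - 'X_[m']).

Lemma mcong_refl m : mcong m m.
Proof. by rewrite /mcong subrr; exact: (ideal0 idealJ). Qed.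

Lemma mcong_sym m m' : mcong m m' -> mcong m' m.
Proof. by rewrite /mcong => Jmm; rewrite -opprB; apply: (idealN idealJ). Qed.

Lemma mcong_trans m2 m1 m3 : mcong m1 m2 -> mcong m2 m3 -> mcong m1 m3.
Proof. by rewrite /mcong => J12 J23; rewrite -(subrKA 'X_[m2]); apply: (idealD idealJ). Qed.

Lemma mcongDl c m m' : mcong m m' -> mcong (c + m)%MM (c + m')%MM.
Proof. by rewrite /mcong !mpolyXD -mulrBr; apply: (idealMl idealJ). Qed.

Lemma mcongD m1 m1' m2 m2' : mcong m1 m1' -> mcong m2 m2' ->
  mcong (m1 + m2)%MM (m1' + m2')%MM.
Proof.
move=> c1 c2; apply: (@mcong_trans (m1' + m2)%MM); last exact: mcongDl.
by rewrite ![(_ + m2)%MM]addmC; apply: mcongDl.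
Qed.

Lemma mcongMn m m' k : mcong m m' -> mcong (m *+ k)%MM (m' *+ k)%MM.
Proof.
move=> c; elim: k => [|k IHk]; first by rewrite !mulm0n; apply: mcong_refl.
by rewrite !mulmS; apply: mcongD.
Qed.

Lemma mcong_replace G H m : mcong G H -> (G <= m)%MM -> mcong m (m - G + H)%MM.
Proof. by move=> cGH le_Gm; have := mcongDl (m - G)%MM cGH; rewrite submK. Qed.

Lemma mcong_exchange L R G H G' H' : mcong G H -> mcong G' H' ->
  (G <= L)%MM -> (G' <= R)%MM -> (L - G + H = R - G' + H')%MM -> mcong L R.
Proof.
move=> cGH cGH' le_GL le_GR E; apply: (mcong_trans (mcong_replace cGH le_GL)).
by rewrite E; apply/mcong_sym/mcong_replace.
Qed.

(* [x^m1 = x^m2] modulo [J] after inverting [x^m1]. *)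
Definition mcong_loc m1 m2 := exists k, mcong (m1 *+ k.+1)%MM (m1 *+ k + m2)%MM.

Lemma mcong_loc_trans m m2 M k : (0 < k)%N -> mcong (m *+ k)%MM M ->
  mcong_loc M (m *+ k.-1 + m2)%MM -> mcong_loc m m2.
Proof.
move=> k_gt0 cM [l cl]; exists (k * l + k.-1)%N.
have -> : (m *+ (k * l + k.-1).+1 = (m *+ k) *+ l.+1)%MM.
  by apply/mnmP => j; rewrite !mulmnE; nia.
have -> : (m *+ (k * l + k.-1) + m2 = (m *+ k) *+ l + (m *+ k.-1 + m2))%MM.
  by apply/mnmP => j; rewrite !mnmDE !mulmnE; nia.
apply: (mcong_trans (mcongMn _ cM)); apply: (mcong_trans cl).
by apply: mcongD; [apply/mcong_sym/mcongMn | apply: mcong_refl].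
Qed.

Lemma mcong_loc_expr m1 m2 : mcong_loc m1 m2 -> mcong_loc m2 m1 ->
  exists k, J (('X_[m1] - 'X_[m2]) ^+ k).
Proof.
have absorb m m' k l : mcong (m *+ k.+1)%MM (m *+ k + m')%MM -> (k <= l)%N ->
    J ('X_[m] ^+ l * ('X_[m] - 'X_[m'])).
  rewrite /mcong mulmSr !mpolyXD -mpolyXn -mulrBr => Jk le_kl.
  by rewrite -(subnK le_kl) exprD -mulrA; apply: (idealMl idealJ).
move=> [k1 c1] [k2 c2]; exists (maxn k1 k2 + maxn k1 k2).+1.
apply: (ideal_exprB idealJ) => //; first by apply: (absorb _ _ k1) => //; apply: leq_maxl.
by rewrite -opprB mulrN; apply/(idealN idealJ)/(absorb _ _ k2) => //; apply: leq_maxr.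
Qed.

End MonomialCongruence.

Section SplittingGeneralities.
Variables (K : fieldType) (N : nat).
Implicit Types (m : 'X_{1..N}) (f : {mpoly K[N]}).

Lemma toric_ideal_neq n n' (A : config N n) (B : config N n') m m' :
  Aimg A m = Aimg A m' -> Aimg B m != Aimg B m' ->
  ~ (forall f, @toric_ideal K N n' B f <-> toric_ideal A f).
Proof.
move=> eqA neqB eqBA; apply: (@toric_binom_expr K _ _ _ _ _ 1 neqB).
by rewrite expr1; apply/eqBA/toric_binom.
Qed.

Lemma rad_split_with_ge2 n (A : config N n) r m m' :
  Aimg A m = Aimg A m' -> m != m' -> rad_split_with K A r -> (2 <= r)%N.
Proof.
move=> eqA neq_mm'; case: r => [|[|//]] [ns [B [_ [IAB neqB]]]].
  have /IAB [k [h [_]]] := @toric_binom K _ _ _ _ _ eqA.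
  rewrite big_ord0 => /eqP; rewrite expf_eq0 subr_eq0 => /andP [_ /eqP eqX].
  have := congr1 (mcoeff m) eqX; rewrite !mcoeffX eqxx eq_sym (negbTE neq_mm').
  by move/eqP; rewrite oner_eq0.
case: (neqB ord0) => f; split=> [IBf|].
  apply/IAB; exists 1%N; rewrite expr1.
  by apply: ideal_sum_mem => // i; apply: toric_is_ideal.
move=> /toric_binomial_span [rep [eq_rep ->]]; apply: toric_sum => m1; apply: toricZ.
have [eqB|neqB1] := eqVneq (Aimg (B ord0) m1) (Aimg (B ord0) (rep m1)).
  exact: toric_binom.
have /IAB [k [h [IBh]]] := @toric_binom K _ _ _ _ _ (esym (eq_rep m1)).
by rewrite big_ord1 => eq_h; have := IBh ord0; rewrite -eq_h => /(toric_binom_expr neqB1).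
Qed.

End SplittingGeneralities.

Section NonnegativeConfig.
Variables (K : fieldType) (N n : nat) (A : config N n).
Hypothesis A_ge0 : forall j k, 0 <= A j k.
Implicit Types (m : 'X_{1..N}) (f : {mpoly K[N]}).

Definition col_mnm j : 'X_{1..n} := [multinom `|A j k|%N | k < n].

Definition Aimg_mnm m : 'X_{1..n} := (\sum_(j < N) col_mnm j *+ m j)%MM.

Lemma Aimg_mnmE m : Aimg A m = [ffun k => (Aimg_mnm m k)%:Z].
Proof.
apply/ffunP => k; rewrite !ffunE /Aimg_mnm mnm_sumE.
rewrite (big_morph Posz PoszD (erefl _)); apply: eq_bigr => j _.
by rewrite mulmnE mnmE PoszM gez0_abs // mulrC.
Qed.

Definition toric_map f : {mpoly K[n]} := mmap (@mpolyC n K) (fun j => 'X_[col_mnm j]) f.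

Lemma toric_mapE f b : (toric_map f)@_b = toric_coef A [ffun k => (b k)%:Z] f.
Proof.
rewrite /toric_map /mmap raddf_sum; apply: eq_bigr => m _.
rewrite /= mcoeffCM /mmap1 mprodXnE -/(Aimg_mnm m) mcoeffX Aimg_mnmE.
congr (_ * (nat_of_bool _)%:R).
apply/idP/idP => /eqP E; apply/eqP; first by apply/ffunP => k; rewrite !ffunE E.
by apply/mnmP => k; move/ffunP: E => /(_ k); rewrite !ffunE => -[].
Qed.

Lemma toric_ideal_map f : toric_ideal A f <-> toric_map f = 0.
Proof.
rewrite toric_idealE; split=> [Af|Pf b].
  by apply/mpolyP => b; rewrite toric_mapE Af mcoeff0.
have [/forallP b_ge0|/forallPn [k bk_lt0]] := boolP [forall k, 0 <= b k].
  have -> : b = [ffun k => ([multinom `|b k|%N | k < n] k)%:Z].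
    by apply/ffunP => k; rewrite ffunE mnmE gez0_abs.
  by rewrite -toric_mapE Pf mcoeff0.
rewrite /toric_coef big1 // => m _; rewrite Aimg_mnmE.
by case: eqP => [E|]; [move: bk_lt0; rewrite -E ffunE | rewrite mulr0].
Qed.

Lemma toric_ideal_expr f k : toric_ideal A (f ^+ k) -> toric_ideal A f.
Proof.
rewrite !toric_ideal_map => /eqP.
by rewrite [toric_map _]rmorphXn expf_eq0 => /andP [_ /eqP].
Qed.

End NonnegativeConfig.

Section RowExtension.
Variables (N n : nat) (A : config N n) (e : 'I_N -> int).
Implicit Types (m : 'X_{1..N}).

Definition add_row : config N (n + 1) :=
  fun j k => match split k with inl k' => A j k' | inr _ => e j end.

Definition row_img m : int := \sum_(j < N) (m j)%:Z * e j.

Lemma Aimg_add_rowP m m' : Aimg add_row m = Aimg add_row m' <->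
  Aimg A m = Aimg A m' /\ row_img m = row_img m'.
Proof.
have Aimgl m1 k : Aimg add_row m1 (lshift 1 k) = Aimg A m1 k.
  by rewrite !ffunE /add_row (unsplitK (inl k)).
have Aimgr m1 i : Aimg add_row m1 (rshift n i) = row_img m1.
  by rewrite !ffunE /add_row (unsplitK (inr i)).
split=> [E|[EA Ee]].
  split; last by rewrite -(Aimgr m ord0) -(Aimgr m' ord0) E.
  by apply/ffunP => k; rewrite -Aimgl -Aimgl E.
by apply/ffunP => k; case: (split_ordP k) => [k' ->|i ->]; rewrite ?Aimgl ?Aimgr ?EA.
Qed.

Lemma pointed_add_row : pointed_config A -> pointed_config add_row.
Proof.
move=> pA u Au; apply: pA => k; rewrite -[RHS](Au (lshift 1 k)).
by apply: eq_bigr => j _; rewrite /add_row (unsplitK (inl k)).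
Qed.

Lemma toric_add_row (K : fieldType) (f : {mpoly K[N]}) :
  toric_ideal add_row f -> toric_ideal A f.
Proof.
move=> /toric_binomial_span [rep [eq_rep ->]]; apply: toric_sum => m.
by apply/toricZ/toric_binom; have /Aimg_add_rowP [] := eq_rep m.
Qed.

End RowExtension.

Lemma dvdz_min_pos (S : int -> Prop) (p : nat) : (0 < p)%N ->
  (forall x y c, S x -> S y -> S (x + c * y)) -> S p%:Z ->
  (forall r : nat, (0 < r)%N -> S r%:Z -> (p <= r)%N) ->
  forall x, S x -> exists c, x = c * p%:Z.
Proof.
move=> p_gt0 S_lin Sp p_min x Sx; exists (x %/ p%:Z)%Z.
have p_neq0 : p%:Z != 0 by rewrite eqz_nat -lt0n.
have Smod : S (x %% p%:Z)%Z.
  by rewrite /modz -mulNr; apply: S_lin.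
have [r Er] : exists r : nat, (x %% p%:Z)%Z = r%:Z.
  by exists `|(x %% p%:Z)%Z|%N; rewrite gez0_abs // modz_ge0.
have lt_rp : (r < p)%N by rewrite -ltz_nat -Er -[X in _ < X]gez0_abs ?ltz_mod.
rewrite {1}(divz_eq x p%:Z) Er; case: (posnP r) => [->|r_gt0]; first by rewrite addr0.
by have := p_min r r_gt0; rewrite -Er => /(_ Smod); rewrite leqNgt lt_rp.
Qed.

Lemma int_split (r : int) : exists u v : nat, r = u%:Z - v%:Z /\ (u = 0 \/ v = 0)%N.
Proof.
case: r => [k|k]; first by exists k, 0%N; split; [rewrite subr0 | right].
by exists 0%N, k.+1; split; [rewrite NegzE sub0r | left].
Qed.

Section Corconfig.
Variables (n : nat) (d : 'I_n -> nat) (a : 'I_2 -> 'I_n -> nat).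
Hypothesis d_gt0 : forall k, (0 < d k)%N.
Hypothesis a_neq0 : forall i, exists k, a i k != 0%N.

Local Notation A := (corconfig d a).
Local Notation a1 := (a ord0).
Local Notation a2 := (a ord_max).

Definition xi (k : 'I_n) : 'I_(n + 2) := lshift 2 k.
Definition yi : 'I_(n + 2) := rshift n ord0.
Definition zi : 'I_(n + 2) := rshift n ord_max.

Lemma corconfig_indexP j : (exists k, j = xi k) \/ j = yi \/ j = zi.
Proof.
case: (split_ordP j) => [k ->|[[|[|//]] lt_i2] ->]; first by left; exists k.
  by right; left; apply: val_inj.
by right; right; apply: val_inj.
Qed.

Lemma yi_xi k : (yi == xi k) = false. Proof. exact: eq_rlshift. Qed.
Lemma zi_xi k : (zi == xi k) = false. Proof. exact: eq_rlshift. Qed.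
Lemma xi_yi k : (xi k == yi) = false. Proof. exact: eq_lrshift. Qed.
Lemma xi_zi k : (xi k == zi) = false. Proof. exact: eq_lrshift. Qed.
Lemma yi_zi : (yi == zi) = false. Proof. by rewrite eq_rshift. Qed.
Lemma zi_yi : (zi == yi) = false. Proof. by rewrite eq_rshift. Qed.

Implicit Types (m : 'X_{1..n+2}).

Definition Adeg m (k : 'I_n) : nat := (d k * m (xi k) + a1 k * m yi + a2 k * m zi)%N.

Lemma AimgE m : Aimg A m = [ffun k => (Adeg m k)%:Z].
Proof.
have sl j : split (@lshift n 2 j) = inl j by exact: (unsplitK (inl j)).
have sr j : split (@rshift n 2 j) = inr j by exact: (unsplitK (inr j)).
apply/ffunP=> k; rewrite !ffunE big_split_ord /=.
rewrite (eq_bigr (fun j => (m (xi j))%:Z * (if j == k then (d k)%:Z else 0))); last first.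
  by move=> j _; rewrite /corconfig sl; case: eqP => [->|].
rewrite (bigD1 k) //= eqxx big1 ?addr0 => [|j /negbTE ->]; last by rewrite mulr0.
rewrite (eq_bigr (fun j => (m (rshift n j))%:Z * (a j k)%:Z)); last first.
  by move=> j _; rewrite /corconfig sr.
rewrite big_ord_recl big_ord1 /Adeg /yi /zi.
have -> : lift ord0 (@ord0 0) = @ord_max 1 by apply: val_inj.
lia.
Qed.

Lemma Aimg_eqP m m' : Aimg A m = Aimg A m' <-> forall k, Adeg m k = Adeg m' k.
Proof.
rewrite !AimgE; split=> [/ffunP E k|E]; last by apply/ffunP=> k; rewrite !ffunE E.
by have := E k; rewrite !ffunE => -[].
Qed.

Lemma AdegD m m' k : Adeg (m + m')%MM k = (Adeg m k + Adeg m' k)%N.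
Proof. rewrite /Adeg !mnmDE; lia. Qed.

Lemma AdegMn m t k : Adeg (m *+ t)%MM k = (Adeg m k * t)%N.
Proof. rewrite /Adeg !mulmnE; lia. Qed.

Lemma AdegBD L G H : (G <= L)%MM -> (forall k, Adeg H k = Adeg G k) ->
  forall k, Adeg (L - G + H)%MM k = Adeg L k.
Proof. by move=> le_GL eq_HG k; rewrite AdegD eq_HG -AdegD submK. Qed.

Lemma mnm_Adeg_eq m m' : m yi = m' yi -> m zi = m' zi ->
  (forall k, Adeg m k = Adeg m' k) -> m = m'.
Proof.
move=> eq_y eq_z eq_deg; apply/mnmP=> j.
case: (corconfig_indexP j) => [[k ->]|[->|->]] //.
have := eq_deg k; rewrite /Adeg eq_y eq_z => /addIn /addIn /eqP.
by rewrite eqn_pmul2l // => /eqP.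
Qed.

Lemma corconfig_ge0 j k : 0 <= A j k.
Proof. by rewrite /corconfig; case: split => [j'|i] //; case: eqP. Qed.

Lemma corconfig_pointed : pointed_config A.
Proof.
move=> u Au; set mu : 'X_{1..n+2} := [multinom u j | j < n + 2].
have deg0 k : Adeg mu k = 0%N.
  have := Au k; have -> : \sum_(j < n + 2) (u j)%:Z * A j k = Aimg A mu k.
    by rewrite ffunE; apply: eq_bigr => j _; rewrite /mu mnmE.
  by rewrite AimgE ffunE => -[].
have uy : u yi = 0%N.
  by have [k ak] := a_neq0 ord0; have := deg0 k; rewrite /Adeg /mu !mnmE; lia.
have uz : u zi = 0%N.
  by have [k ak] := a_neq0 ord_max; have := deg0 k; rewrite /Adeg /mu !mnmE; lia.
move=> j; case: (corconfig_indexP j) => [[k ->]|[->|->]] //.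
by have := deg0 k; have := d_gt0 k; rewrite /Adeg /mu !mnmE; nia.
Qed.

Definition in_lattice (P Q : int) : bool :=
  [forall k, ((d k)%:Z %| P * (a1 k)%:Z + Q * (a2 k)%:Z)%Z].

Lemma in_lattice_lin P Q P' Q' c : in_lattice P Q -> in_lattice P' Q' ->
  in_lattice (P + c * P') (Q + c * Q').
Proof.
move=> /forallP L /forallP L'; apply/forallP=> k.
have -> : (P + c * P') * (a1 k)%:Z + (Q + c * Q') * (a2 k)%:Z =
    (P * (a1 k)%:Z + Q * (a2 k)%:Z) + c * (P' * (a1 k)%:Z + Q' * (a2 k)%:Z) by ring.
by rewrite rpredD ?dvdz_mull.
Qed.

Lemma in_lattice_Adeg m m' : (forall k, Adeg m k = Adeg m' k) ->
  in_lattice ((m yi)%:Z - (m' yi)%:Z) ((m zi)%:Z - (m' zi)%:Z).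
Proof.
move=> eq_deg; apply/forallP=> k; apply/dvdzP; exists ((m' (xi k))%:Z - (m (xi k))%:Z).
by have := congr1 Posz (eq_deg k); rewrite /Adeg !PoszD !PoszM; lia.
Qed.

Lemma ex_p1 : exists p, (0 < p)%N && in_lattice p 0.
Proof.
exists (\prod_k d k)%N; rewrite prodn_gt0 //=; apply/forallP=> k.
by rewrite mul0r addr0 dvdz_mulr // dvdzE /= (bigD1 k) //= dvdn_mulr.
Qed.

Lemma ex_q2 : exists q, (0 < q)%N && in_lattice 0 q.
Proof.
exists (\prod_k d k)%N; rewrite prodn_gt0 //=; apply/forallP=> k.
by rewrite mul0r add0r dvdz_mulr // dvdzE /= (bigD1 k) //= dvdn_mulr.
Qed.

Definition p1 := ex_minn ex_p1.
Definition q2 := ex_minn ex_q2.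

Lemma p1_spec : [/\ (0 < p1)%N, in_lattice p1 0 &
  forall r : nat, (0 < r)%N -> in_lattice r 0 -> (p1 <= r)%N].
Proof.
rewrite /p1; case: ex_minnP => p /andP [p_gt0 Lp] p_min.
by split=> // r r_gt0 Lr; rewrite p_min ?r_gt0.
Qed.

Lemma q2_spec : [/\ (0 < q2)%N, in_lattice 0 q2 &
  forall r : nat, (0 < r)%N -> in_lattice 0 r -> (q2 <= r)%N].
Proof.
rewrite /q2; case: ex_minnP => q /andP [q_gt0 Lq] q_min.
by split=> // r r_gt0 Lr; rewrite q_min ?r_gt0.
Qed.

Lemma ex_g : exists q, (0 < q)%N && [exists p : 'I_p1, in_lattice p q].
Proof.
have [p1_gt0 _ _] := p1_spec; have [q2_gt0 Lq2 _] := q2_spec.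
by exists q2; rewrite q2_gt0; apply/existsP; exists (Ordinal p1_gt0).
Qed.

Definition g := ex_minn ex_g.

Lemma ex_p3 : exists p : nat, in_lattice p g.
Proof. by rewrite /g; case: ex_minnP => q /andP [_ /existsP [p Lp]] _; exists (val p). Qed.

Definition p3 := ex_minn ex_p3.

Lemma g_spec : [/\ (0 < g)%N, in_lattice p3 g &
  forall (P : int) (r : nat), (0 < r)%N -> in_lattice P r -> (g <= r)%N].
Proof.
have [p1_gt0 Lp1 _] := p1_spec.
split; first by rewrite /g; case: ex_minnP => q /andP [].
  by rewrite /p3; case: ex_minnP.
move=> P r r_gt0 LP; rewrite /g; case: ex_minnP => q _ q_min; apply: q_min.
rewrite r_gt0; apply/existsP.
have p1_neq0 : p1%:Z != 0 by rewrite eqz_nat -lt0n.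
have [s Es] : exists s : nat, (P %% p1%:Z)%Z = s%:Z.
  by exists `|(P %% p1%:Z)%Z|%N; rewrite gez0_abs // modz_ge0.
have lt_sp1 : (s < p1)%N by rewrite -ltz_nat -Es -[X in _ < X]gez0_abs ?ltz_mod.
exists (Ordinal lt_sp1) => /=; rewrite -Es /modz -mulNr.
by have := in_lattice_lin (- (P %/ p1%:Z)%Z) LP Lp1; rewrite mulr0 addr0.
Qed.

Lemma in_lattice_basis P Q : in_lattice P Q ->
  exists s t, P = t * p1%:Z + s * p3%:Z /\ Q = s * g%:Z.
Proof.
move=> LPQ; have [g_gt0 Lg g_min] := g_spec; have [p1_gt0 Lp1 p1_min] := p1_spec.
have [s Es] : exists s, Q = s * g%:Z.
  apply: (dvdz_min_pos (S := fun Q => exists P, in_lattice P Q)) => //.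
  - by move=> Q1 Q2 c [x Lx] [y Ly]; exists (x + c * y); apply: in_lattice_lin.
  - by exists p3%:Z.
  - by move=> r r_gt0 [x Lx]; apply: g_min Lx.
  - by exists P.
have [t Et] : exists t, P - s * p3%:Z = t * p1%:Z.
  apply: (dvdz_min_pos (S := fun P => in_lattice P 0)) => //.
  - by move=> x y c Lx Ly; have := in_lattice_lin c Lx Ly; rewrite mulr0 addr0.
  - by have := in_lattice_lin (- s) LPQ Lg; rewrite Es !mulNr subrr.
by exists s, t; split=> //; rewrite -Et; ring.
Qed.

Lemma in_lattice_nat (p q : nat) :
  in_lattice p q = [forall k, (d k %| p * a1 k + q * a2 k)%N].
Proof. by apply: eq_forallb => k; rewrite -!PoszM -PoszD dvdzE. Qed.

Lemma Adeg_eq_decomp m1 m2 : (forall k, Adeg m1 k = Adeg m2 k) ->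
  exists x x' c c' : nat, [/\ (m1 yi + x' * p1 + c' * p3 = m2 yi + x * p1 + c * p3)%N,
     (m1 zi + c' * g = m2 zi + c * g)%N & (c = 0 \/ c' = 0)%N].
Proof.
move=> /in_lattice_Adeg /in_lattice_basis [s [t [Ey Ez]]].
have [x [x' [Et _]]] := int_split t; have [c [c' [Es c0]]] := int_split s.
exists x, x', c, c'; split=> //; apply/eqP; rewrite -eqz_nat !PoszD !PoszM; apply/eqP.
  by move: Ey; rewrite Et Es; lia.
by move: Ez; rewrite Es; lia.
Qed.

Definition xmnm (v : 'I_n -> nat) : 'X_{1..n+2} :=
  [multinom if split j is inl k then v k else 0%N | j < n + 2].

Lemma xmnm_xi v k : xmnm v (xi k) = v k.
Proof. by rewrite mnmE (unsplitK (inl k)). Qed.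

Lemma xmnm_yi v : xmnm v yi = 0%N.
Proof. by rewrite mnmE (unsplitK (inr _)). Qed.

Lemma xmnm_zi v : xmnm v zi = 0%N.
Proof. by rewrite mnmE (unsplitK (inr _)). Qed.

Local Ltac mnm_coord :=
  rewrite ?(mnmDE, mnmBE, mulmnE, mnm1E, xmnm_xi, xmnm_yi, xmnm_zi)
          ?eqxx ?yi_zi ?zi_yi ?yi_xi ?zi_xi ?xi_yi ?xi_zi /=.

Definition alpha k := (p1 * a1 k %/ d k)%N.
Definition beta k := (q2 * a2 k %/ d k)%N.
Definition gamma k := ((p3 * a1 k + g * a2 k) %/ d k)%N.

Definition y_p1 := (U_(yi) *+ p1)%MM.
Definition x_alpha := xmnm alpha.
Definition z_q2 := (U_(zi) *+ q2)%MM.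
Definition x_beta := xmnm beta.
Definition yz_p3g := (U_(yi) *+ p3 + U_(zi) *+ g)%MM.
Definition x_gamma := xmnm gamma.

Lemma Adeg_y_p1 k : Adeg y_p1 k = Adeg x_alpha k.
Proof.
have [_ + _] := p1_spec; rewrite in_lattice_nat => /forallP /(_ k).
rewrite /Adeg /y_p1 /x_alpha; mnm_coord; rewrite mul0n addn0 => dvd_k.
rewrite [(d k * (_ %/ _))%N]mulnC divnK //; lia.
Qed.

Lemma Adeg_z_q2 k : Adeg z_q2 k = Adeg x_beta k.
Proof.
have [_ + _] := q2_spec; rewrite in_lattice_nat => /forallP /(_ k).
rewrite /Adeg /z_q2 /x_beta; mnm_coord; rewrite mul0n add0n => dvd_k.
rewrite [(d k * (_ %/ _))%N]mulnC divnK //; lia.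
Qed.

Lemma Adeg_yz_p3g k : Adeg yz_p3g k = Adeg x_gamma k.
Proof.
have [_ + _] := g_spec; rewrite in_lattice_nat => /forallP /(_ k).
rewrite /Adeg /yz_p3g /x_gamma; mnm_coord => dvd_k.
rewrite [(d k * (_ %/ _))%N]mulnC divnK //; lia.
Qed.

Lemma alpha_gt0 k : (0 < alpha k)%N -> (0 < a1 k)%N.
Proof. by rewrite /alpha; case: (posnP (a1 k)) => [->|//]; rewrite muln0 div0n. Qed.

Lemma beta_gt0 k : (0 < a2 k)%N -> (0 < beta k)%N.
Proof.
move=> a2_gt0; have [q2_gt0 + _] := q2_spec; rewrite in_lattice_nat => /forallP /(_ k).
rewrite mul0n add0n => /divnK; rewrite -/(beta k) lt0n; apply: contra_eqN => /eqP ->.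
by rewrite mul0n eq_sym muln_eq0 negb_or -!lt0n q2_gt0.
Qed.

Section Congruences.
Variables (K : fieldType) (J : {mpoly K[n + 2]} -> Prop).
Hypothesis idealJ : is_ideal J.
Hypothesis cong_y : mcong J y_p1 x_alpha.
Hypothesis cong_z : mcong J z_q2 x_beta.
Hypothesis cong_yz : mcong J yz_p3g x_gamma.

Lemma mcong_loc_ypos m1 m2 : (forall k, Adeg m1 k = Adeg m2 k) -> (0 < m1 yi)%N ->
  mcong_loc J m1 m2.
Proof.
move=> eq_deg y_gt0; have [x [x' [c [c' [Ey Ez c0]]]]] := Adeg_eq_decomp eq_deg.
set k := (x * p1 + c * p3 + x' * p1 + c' * p3)%N; exists k.
pose G u v := (y_p1 *+ u + yz_p3g *+ v)%MM.
pose H u v := (x_alpha *+ u + x_gamma *+ v)%MM.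
have cGH u v : mcong J (G u v) (H u v).
  by apply: (mcongD idealJ); apply: (mcongMn idealJ).
have deg_HG u v l : Adeg (H u v) l = Adeg (G u v) l.
  rewrite /G /H !AdegD !(AdegMn x_alpha, AdegMn x_gamma, AdegMn y_p1, AdegMn yz_p3g).
  by rewrite Adeg_y_p1 Adeg_yz_p3g.
have le_k : (k <= m1 yi * k)%N by rewrite leq_pmull.
have le_z : (m1 zi <= m1 zi * k.+1)%N by rewrite leq_pmulr.
have le_GL : (G x c <= m1 *+ k.+1)%MM.
  apply/mnm_lepP => j; case: (corconfig_indexP j) => [[l ->]|[->|->]];
    rewrite /G /y_p1 /yz_p3g; mnm_coord; rewrite ?mulnS; lia.
have le_GR : (G x' c' <= m1 *+ k + m2)%MM.
  apply/mnm_lepP => j; case: (corconfig_indexP j) => [[l ->]|[->|->]];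
    rewrite /G /y_p1 /yz_p3g; mnm_coord; rewrite ?mulnS; lia.
apply: (mcong_exchange idealJ (cGH x c) (cGH x' c') le_GL le_GR).
apply: mnm_Adeg_eq => [||l].
- by rewrite /G /H /y_p1 /yz_p3g /x_alpha /x_gamma; mnm_coord; rewrite ?mulnS; lia.
- by rewrite /G /H /y_p1 /yz_p3g /x_alpha /x_gamma; mnm_coord; rewrite ?mulnS; lia.
- by rewrite (AdegBD le_GL) // (AdegBD le_GR) // AdegD !AdegMn eq_deg mulnS; lia.
Qed.

Lemma mcong_y0 m1 m2 : (forall k, Adeg m1 k = Adeg m2 k) ->
  m1 yi = 0%N -> m2 yi = 0%N -> mcong J m1 m2.
Proof.
have step m m' b : (forall k, Adeg m k = Adeg m' k) -> m yi = 0%N -> m' yi = 0%N ->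
    (m zi = m' zi + b * q2)%N -> mcong J m m'.
  move=> eq_deg y0 y0' Ez; have le_zm : (z_q2 *+ b <= m)%MM.
    apply/mnm_lepP => j; case: (corconfig_indexP j) => [[l ->]|[->|->]];
      rewrite /z_q2; mnm_coord; lia.
  have := mcong_replace idealJ (mcongMn idealJ b cong_z) le_zm.
  congr mcong; apply: mnm_Adeg_eq => [||l].
  - by rewrite /z_q2 /x_beta; mnm_coord; lia.
  - by rewrite /z_q2 /x_beta; mnm_coord; lia.
  - by rewrite (AdegBD le_zm) // => l'; rewrite (AdegMn x_beta) (AdegMn z_q2) Adeg_z_q2.
move=> eq_deg y1 y2.
have [t Et] : exists t, (m1 zi)%:Z - (m2 zi)%:Z = t * q2%:Z.
  have [q2_gt0 Lq2 q2_min] := q2_spec.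
  apply: (dvdz_min_pos (S := in_lattice 0)) => //.
  - by move=> x y c Lx Ly; have := in_lattice_lin c Lx Ly; rewrite mulr0 addr0.
  - by have := in_lattice_Adeg eq_deg; rewrite y1 y2 subrr.
have [b [b' [Eb [b0|b'0]]]] := int_split t; move: Et; rewrite Eb ?b0 ?b'0 => Et.
  by apply: (mcong_sym idealJ); apply: (step _ _ b') => //; lia.
by apply: (step _ _ b) => //; lia.
Qed.

Lemma mcong_lift_y m1 m2 : (forall k, Adeg m1 k = Adeg m2 k) ->
  m1 yi = 0%N -> (0 < m2 yi)%N ->
  exists k M, [/\ (0 < k)%N, mcong J (m1 *+ k) M, (0 < M yi)%N &
                  forall l, Adeg M l = (Adeg m1 l * k)%N].
Proof.
move=> eq_deg y1 y2_gt0; have [q2_gt0 _ _] := q2_spec; have [p1_gt0 _ _] := p1_spec.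
set T := (\sum_l alpha l).+1.
have alpha_lt l : (alpha l < T)%N by rewrite ltnS (bigD1 l) //= leq_addr.
set b := if (0 < m1 zi)%N then T else 0%N; set k := (T * q2)%N.
have le_zm : (z_q2 *+ b <= m1 *+ k)%MM.
  apply/mnm_lepP => j; case: (corconfig_indexP j) => [[l ->]|[->|->]];
    rewrite /z_q2; mnm_coord => //.
  by rewrite /b /k; case: posnP => [->|z_gt0] //; nia.
set M := (m1 *+ k - z_q2 *+ b + x_beta *+ b)%MM.
(* Each [x_l] needed by [x_alpha] is already in [m1], or comes from [z] via [x_beta]. *)
have le_xM : (x_alpha <= M)%MM.
  apply/mnm_lepP => j; case: (corconfig_indexP j) => [[l ->]|[->|->]];
    rewrite /M /x_alpha /z_q2 /x_beta; mnm_coord => //.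
  rewrite subn0; case: (posnP (alpha l)) => [-> //|/alpha_gt0 a1_gt0].
  have := eq_deg l; rewrite /Adeg y1 => deg_l.
  case: (posnP (m1 (xi l))) => [x0|x_gt0]; last by have := alpha_lt l; rewrite /k; nia.
  have z_gt0 : (0 < m1 zi)%N by move: deg_l; rewrite x0; nia.
  have /beta_gt0 beta_gt0 : (0 < a2 l)%N by move: deg_l; rewrite x0; nia.
  by have := alpha_lt l; rewrite /b z_gt0; nia.
exists k, (M - x_alpha + y_p1)%MM; split.
- by rewrite muln_gt0 q2_gt0.
- apply: (mcong_trans idealJ (mcong_replace idealJ (mcongMn idealJ b cong_z) le_zm)).
  exact: (mcong_replace idealJ (mcong_sym idealJ cong_y) le_xM).
- by rewrite /M /y_p1 /z_q2 /x_alpha /x_beta; mnm_coord; rewrite y1; lia.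
- move=> l; rewrite (AdegBD le_xM) => [|l']; last exact: Adeg_y_p1.
  rewrite (AdegBD le_zm) => [|l']; first by rewrite AdegMn.
  by rewrite (AdegMn x_beta) (AdegMn z_q2) Adeg_z_q2.
Qed.

Lemma mcong_loc_Adeg m1 m2 : (forall k, Adeg m1 k = Adeg m2 k) -> mcong_loc J m1 m2.
Proof.
move=> eq_deg; case: (posnP (m1 yi)) => [y1|]; last exact: mcong_loc_ypos.
case: (posnP (m2 yi)) => [y2|y2_gt0].
  by exists 0%N; rewrite mulm1n mulm0n add0m; apply: mcong_y0.
have [k [M [k_gt0 cM M_gt0 deg_M]]] := mcong_lift_y eq_deg y1 y2_gt0.
apply: (mcong_loc_trans idealJ k_gt0 cM); apply: mcong_loc_ypos => // l.
by rewrite deg_M AdegD AdegMn -eq_deg -{1}(prednK k_gt0) mulnS; lia.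
Qed.

Lemma Adeg_binom_expr m1 m2 : (forall k, Adeg m1 k = Adeg m2 k) ->
  exists k, J (('X_[m1] - 'X_[m2]) ^+ k).
Proof.
by move=> eq_deg; apply: (mcong_loc_expr idealJ); apply: mcong_loc_Adeg.
Qed.

End Congruences.

Definition yz_row (u v : int) (j : 'I_(n + 2)) : int := u * (j == yi)%:R + v * (j == zi)%:R.

Lemma row_img_yz u v m : row_img (yz_row u v) m = u * (m yi)%:Z + v * (m zi)%:Z.
Proof.
have pick j0 : \sum_(j < n + 2) (m j)%:Z * (j == j0)%:R = (m j0)%:Z.
  by rewrite (bigD1 j0) //= eqxx mulr1 big1 ?addr0 // => j /negbTE ->; rewrite mulr0.
rewrite /row_img /yz_row (eq_bigr (fun j => u * ((m j)%:Z * (j == yi)%:R) +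
  v * ((m j)%:Z * (j == zi)%:R))) => [|j _]; last by ring.
by rewrite big_split -!mulr_sumr !pick.
Qed.

Definition split_row (i : 'I_3) : 'I_(n + 2) -> int :=
  match val i with 0 => yz_row 0 1 | 1 => yz_row 1 0 | _ => yz_row g%:Z (- p3%:Z) end.

Definition split_config (i : 'I_3) := add_row A (split_row i).

Local Notation ord1 := (@Ordinal 3 1 isT).
Local Notation ord2 := (@Ordinal 3 2 isT).

Lemma split_config_gens :
  [/\ Aimg (split_config ord0) y_p1 = Aimg (split_config ord0) x_alpha,
      Aimg (split_config ord1) z_q2 = Aimg (split_config ord1) x_beta &
      Aimg (split_config ord2) yz_p3g = Aimg (split_config ord2) x_gamma].
Proof.
split; apply/Aimg_add_rowP; rewrite !row_img_yz Aimg_eqP /=.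
- by split; [exact: Adeg_y_p1 | rewrite /y_p1 /x_alpha; mnm_coord].
- by split; [exact: Adeg_z_q2 | rewrite /z_q2 /x_beta; mnm_coord].
- by split; [exact: Adeg_yz_p3g | rewrite /yz_p3g /x_gamma; mnm_coord; lia].
Qed.

Lemma toric_split_config_neq (K : fieldType) i :
  ~ (forall f, @toric_ideal K _ _ (split_config i) f <-> toric_ideal A f).
Proof.
have [p1_gt0 _ _] := p1_spec; have [q2_gt0 _ _] := q2_spec; have [g_gt0 _ _] := g_spec.
have neq_row m m' : row_img (split_row i) m != row_img (split_row i) m' ->
    Aimg (split_config i) m != Aimg (split_config i) m'.
  by apply: contra_neq => /Aimg_add_rowP [].
case: i neq_row => [[|[|[|//]]] lt_i3] /= neq_row.
- apply: (toric_ideal_neq ((Aimg_eqP _ _).2 Adeg_z_q2) (neq_row z_q2 x_beta _)).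
  by rewrite !row_img_yz /z_q2 /x_beta; mnm_coord; apply/eqP; lia.
- apply: (toric_ideal_neq ((Aimg_eqP _ _).2 Adeg_y_p1) (neq_row y_p1 x_alpha _)).
  by rewrite !row_img_yz /y_p1 /x_alpha; mnm_coord; apply/eqP; lia.
- apply: (toric_ideal_neq ((Aimg_eqP _ _).2 Adeg_y_p1) (neq_row y_p1 x_alpha _)).
  by rewrite !row_img_yz /y_p1 /x_alpha; mnm_coord; apply/eqP; nia.
Qed.

Lemma toric_ideal_split (K : fieldType) (f : {mpoly K[n + 2]}) :
  toric_ideal A f <-> radical (ideal_sum (fun i => @toric_ideal K _ _ (split_config i))) f.
Proof.
set I := fun i => _; have idealI i : is_ideal (I i) := @toric_is_ideal K _ _ _.
have idealJ := ideal_sum_is_ideal idealI.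
have congJ i m m' : Aimg (split_config i) m = Aimg (split_config i) m' ->
    mcong (ideal_sum I) m m'.
  by move=> E; apply: (ideal_sum_mem idealI (i := i)); apply: toric_binom.
split=> [/toric_binomial_span [rep [eq_rep ->]]|[k [h [Ih Eh]]]]; last first.
  apply: (toric_ideal_expr corconfig_ge0 (k := k)); rewrite Eh.
  by apply: toric_sum => i; apply: toric_add_row (Ih i).
have [gen_y gen_z gen_yz] := split_config_gens.
apply: (ideal_expr_sum idealJ) => m _.
have [k Jk] := Adeg_binom_expr idealJ (congJ _ _ _ gen_y) (congJ _ _ _ gen_z)
  (congJ _ _ _ gen_yz) ((Aimg_eqP _ _).1 (esym (eq_rep m))).
by exists k; rewrite -mul_mpolyC exprMn; apply: (idealMl idealJ).
Qed.

Lemma rad_split_with3 (K : fieldType) : rad_split_with K A 3.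
Proof.
exists (fun _ => (n + 1)%N), split_config; split.
  by move=> i; apply/pointed_add_row/corconfig_pointed.
by split; [apply: toric_ideal_split | apply: toric_split_config_neq].
Qed.

End Corconfig.

Theorem corollary4p4 (K : fieldType) (n : nat) (d : 'I_n -> nat)
  (a : 'I_2 -> 'I_n -> nat)
  (hd : forall j, (0 < d j)%N)
  (ha : forall i, exists j, a i j != 0%N) :
  (exists r : nat, (r <= 3)%N /\ rad_split_with K (corconfig d a) r) /\
  (forall r : nat, rad_split_with K (corconfig d a) r -> (2 <= r)%N).
Proof.
split; first by exists 3%N; split=> //; apply: rad_split_with3.
move=> r; apply: (rad_split_with_ge2 (m := y_p1 a hd) (m' := x_alpha a hd)).
  by apply/Aimg_eqP/Adeg_y_p1.
have [p1_gt0 _ _] := p1_spec a hd.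
apply/eqP => /(congr1 (fun m : 'X_{1..n+2} => m (yi n))).
by rewrite /y_p1 /x_alpha mulmnE mnm1E eqxx xmnm_yi; lia.
Qed.
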